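(* Let $\Omega\subset\mathbb{R}^d$ be compact and let $\alpha^*:\Omega\to\mathbb{R}^{N-1}$ be the continuous function $\alpha^*(\omega)=A^{-1}F(\omega)$ described in the context, with $\sup_{\omega\in\Omega}|\alpha^*(\omega)|<C_\alpha$. Then \[ \lim_{n\to\infty}\ \inf_{\tilde g\in\mathcal{N}_n}\ \|\tilde g-\alpha^*\|_{C(\Omega)}=0 . \]
   Context: Let $I=(-1,1)$, $\nu\ge 0$, and let $f(x;\omega)$ be an external force with $f\in C(\Omega;L^1(I))$. Let $L_k$ denote the $k$-th Legendre polynomial and let $\phi_k=L_k+a_kL_{k+1}+b_kL_{k+2}$, $k=1,\dots,N-1$, be basis functions (the constants $a_k,b_k$ chosen so that $\phi_k$ satisfies the boundary condition). Define $S,M\in\mathbb{R}^{(N-1)\times(N-1)}$ and $F(\omega)\in\mathbb{R}^{N-1}$ by $S_{ij}=\int_I\phi_i'\phi_j'\,dx$, $M_{ij}=\int_I\phi_i\phi_j\,dx$, $F_j(\omega)=\int_I f(x;\omega)\phi_j(x)\,dx$, and let $A=S+\nu M$, assumed symmetric and non-singular; $\alpha^*(\omega)=A^{-1}F(\omega)$. Neural networks: an $L$-layer feed-forward network $\mathbb{R}^{n_0}\to\mathbb{R}^{n_L}$ is defined by $f^1(x)=W^1x+b^1$, $f^\ell(x)=W^\ell\sigma(f^{\ell-1}(x))+b^\ell$ ($2\le\ell\le L$), with $\sigma$ applied componentwise. Let $\{\vec n_n\}$ be a sequence of architectures such that every network of architecture $\vec n_n$ is realized by some network of architecture $\vec n_{n+1}$,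 and let $\mathcal N_n^*$ be the set of realizations of networks of architecture $\vec n_n$ (maps $\mathbb{R}^d\to\mathbb{R}^{N-1}$), so $\mathcal N_n^*\subset\mathcal N_{n+1}^*$. Standing assumption (universal approximation): for every compact $K\subset\mathbb{R}^d$ and every $g\in C(K,\mathbb{R}^{N-1})$, $\lim_{n\to\infty}\inf_{\hat g\in\mathcal N_n^*}\|\hat g-g\|_{C(K)}=0$. Let $\sigma^*:\mathbb{R}\to\mathbb{R}$ be a bounded activation function with continuous inverse (e.g. sigmoid or $\tanh$), $\sigma_-=\inf\sigma^*$, $\sigma_+=\sup\sigma^*$, and let $h:[\sigma_-,\sigma_+]\to[-C_\alpha,C_\alpha]$ be the affine map with $h(\sigma_-)=-C_\alpha$, $h(\sigma_+)=C_\alpha$. Define $\mathcal N_n=\{h\circ\sigma^*(g):g\in\mathcal N_n^*\}$ (componentwise composition). *)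

From HB Require Import structures.
From mathcomp Require Import all_boot all_order all_algebra.
From mathcomp Require Import all_classical all_reals all_analysis.
Set Implicit Arguments. Unset Strict Implicit. Unset Printing Implicit Defensive.
Import Order.TTheory GRing.Theory Num.Theory.
Import numFieldNormedType.Exports.
Local Open Scope classical_set_scope.
Local Open Scope ring_scope.

Section Defs.
Variable R : realType.

(* the interval I = (-1,1) (closed version: same Lebesgue integrals) *)
Definition Iset : set R := [set x : R | -1 < x < 1].

Definition intI (g : R -> R) : R :=
  fine (\int[@lebesgue_measure R]_(x in Iset) (g x)%:E)%E.

Definition legendre (n : nat) : {poly R} :=
  ((2 ^ n * n`!)%:R)^-1 *: (('X^2 - 1) ^+ n)^`(n).

Definition phi (a b : nat -> R) (k : nat) : {poly R} :=
  legendre k + a k *: legendre k.+1 + b k *: legendre k.+2.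

(* index i : 'I_(N-1) stands for k = i+1 *)
Definition stiff (a b : nat -> R) (N : nat) : 'M[R]_(N.-1) :=
  \matrix_(i, j) intI (fun x => ((phi a b i.+1)^`()).[x] * ((phi a b j.+1)^`()).[x]).

Definition mass (a b : nat -> R) (N : nat) : 'M[R]_(N.-1) :=
  \matrix_(i, j) intI (fun x => (phi a b i.+1).[x] * (phi a b j.+1).[x]).

Definition Amat (a b : nat -> R) (nu : R) (N : nat) : 'M[R]_(N.-1) :=
  stiff a b N + nu *: mass a b N.

Definition Fvec (a b : nat -> R) (N d : nat) (f : R -> 'cV[R]_d -> R)
  (w : 'cV[R]_d) : 'cV[R]_(N.-1) :=
  \col_j intI (fun x => f x w * (phi a b j.+1).[x]).

Definition alpha_star (a b : nat -> R) (nu : R) (N d : nat)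
  (f : R -> 'cV[R]_d -> R) (w : 'cV[R]_d) : 'cV[R]_(N.-1) :=
  invmx (Amat a b nu N) *m Fvec a b N f w.

Definition C_L1 (d : nat) (Omega : set 'cV[R]_d) (f : R -> 'cV[R]_d -> R) : Prop :=
  (forall w, Omega w -> (@lebesgue_measure R).-integrable Iset (fun x => (f x w)%:E))
  /\ (forall w, Omega w -> forall e : R, 0 < e -> exists2 delta : R, 0 < delta &
        forall w', Omega w' -> `|w' - w| < delta ->
          (\int[@lebesgue_measure R]_(x in Iset) (`|f x w' - f x w|)%:E < e%:E)%E).

(* sup norm on K of a map into R^m (max norm on R^m);
   convention: the norm over an empty K is 0 *)
Definition supnorm (d m : nat) (K : set 'cV[R]_d) (g : 'cV[R]_d -> 'cV[R]_m) : \bar R :=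
  ereal_sup ([set 0%E] `|` [set (`|g x|)%:E | x in K]).

(* realizations of feed-forward networks R^m -> R^p with hidden widths hs:
   A_L o sigma o A_{L-1} o ... o sigma o A_1, A_l affine *)
Fixpoint nn_set (sigma : R -> R) (m : nat) (hs : seq nat) (p : nat)
  : set ('cV[R]_m -> 'cV[R]_p) :=
  match hs with
  | [::] => [set g | exists (W : 'M[R]_(p, m)) (c : 'cV[R]_p),
                       g = fun x => W *m x + c]
  | h :: hs' => [set g | exists (W : 'M[R]_(h, m)) (c : 'cV[R]_h) g',
                   @nn_set sigma h hs' p g' /\
                   g = fun x => g' (map_mx sigma (W *m x + c))]
  end.

Definition hmap (sigs : R -> R) (C : R) (s : R) : R :=
  - C + 2 * C * (s - inf (range sigs)) / (sup (range sigs) - inf (range sigs)).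

Definition nn_bounded (sigma sigs : R -> R) (C : R) (d : nat) (hs : seq nat) (p : nat)
  : set ('cV[R]_d -> 'cV[R]_p) :=
  [set (fun x => map_mx (hmap sigs C \o sigs) (g x)) | g in @nn_set sigma d hs p].

End Defs.

Arguments nn_set {R} sigma m hs p.
Arguments nn_bounded {R} sigma sigs C d hs p.

From HB Require Import structures.
From mathcomp Require Import all_boot all_order all_algebra.
From mathcomp Require Import all_classical all_reals all_analysis.
From mathcomp Require Import measurable_realfun ring lra.
Import Order.TTheory GRing.Theory Num.Theory.
Import numFieldNormedType.Exports.
Local Open Scope classical_set_scope.
Local Open Scope ring_scope.
Set Implicit Arguments. Unset Strict Implicit. Unset Printing Implicit Defensive.

(* alpha^* = A^-1 F is continuous on Omega, because f is in C(Omega; L^1(I)) and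
   the basis polynomials are bounded on I.  The activation sigma^* is continuous,
   bounded and injective, so psi = h o sigma^* maps R onto (-C_alpha, C_alpha)
   with continuous inverse sigma^*^-1 o h^-1 (its range is an interval by the
   IVT).  Since |alpha^*| < C_alpha, g0 = psi^-1 o alpha^* is continuous on the
   compact set Omega, hence bounded.  Universal approximation yields networks g
   converging to g0 uniformly on Omega, and then psi o g converges uniformly to
   psi o g0 = alpha^*, since psi is uniformly continuous near the bounded set
   g0(Omega). *)

Section mx_norm.
Variables (R : realType) (m n : nat).
Implicit Types (A : 'M[R]_(m, n)) (e : R).

Lemma mx_norm_leP A e : `|A| <= e <-> 0 <= e /\ forall i j, `|A i j| <= e.
Proof.
rewrite [X in X <= _]/Num.norm /= mx_normrE; split.
  by move=> /bigmax_leP[e0 Ae]; split => // i j; exact: (Ae (i, j)).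
by move=> [e0 Ae]; apply/bigmax_leP; split => // -[i j] _; exact: Ae.
Qed.

Lemma mx_norm_ltP A e : `|A| < e <-> 0 < e /\ forall i j, `|A i j| < e.
Proof.
rewrite [X in X < _]/Num.norm /= mx_normrE; split.
  by move=> /bigmax_ltP[e0 Ae]; split => // i j; exact: (Ae (i, j)).
by move=> [e0 Ae]; apply/bigmax_ltP; split => // -[i j] _; exact: Ae.
Qed.

Lemma ler_entry_mx_norm A i j : `|A i j| <= `|A|.
Proof. by have /mx_norm_leP[_ ->] : `|A| <= `|A| by []. Qed.

End mx_norm.

Section matrix_continuity.
Variables (R : realType) (m n : nat).

Lemma cvg_mxP (T : Type) (F : set_system T) {FF : Filter F}
    (g : T -> 'M[R]_(m, n)) (A : 'M[R]_(m, n)) :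
  g @ F --> A <-> forall i j, (fun x => g x i j) @ F --> A i j.
Proof.
split=> [gA i j|gA].
  exact: (cvg_comp _ _ gA (@coord_continuous _ _ _ i j A)).
move=> B [P PA PB]; apply: (filterS PB).
apply: filter_forall => i; apply: filter_forall => j; exact: gA i j _ (PA i j).
Qed.

Lemma continuous_mxP (T : topologicalType) (g : T -> 'M[R]_(m, n)) :
  continuous g <-> forall i j, continuous (fun x => g x i j).
Proof.
split=> [gc i j x|gc x]; first by have /cvg_mxP := gc x; apply.
by apply/cvg_mxP => i j; exact: gc.
Qed.

End matrix_continuity.

Lemma mulmx_continuous (R : realType) m n p (B : 'M[R]_(m, n)) :
  continuous (mulmx B : 'M[R]_(n, p) -> 'M[R]_(m, p)).
Proof.
apply/continuous_mxP => i j; under eq_fun do rewrite mxE.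
apply: continuous_big => [|k _ v]; first exact: add_continuous.
apply: (continuousM (s := cst (B i k))); first exact: cst_continuous.
exact: coord_continuous.
Qed.

Lemma within_continuous_comp (T U V : topologicalType) (A : set T) (B : set U)
    (f : T -> U) (g : U -> V) :
  {within A, continuous f} -> (forall x, A x -> B (f x)) ->
  {within B, continuous g} -> {within A, continuous (g \o f)}.
Proof.
move=> /subspace_continuousP fc fAB /subspace_continuousP gc.
apply/subspace_continuousP => x Ax.
apply: cvg_comp (gc _ (fAB x Ax)) => P BP.
have Anear : \forall z \near within A (nbhs x), A z by exact: withinT.
by apply: filterS2 Anear (fc x Ax _ BP) => z Az BPz; exact/BPz/fAB.
Qed.

Lemma within_continuous_map_mx (T : topologicalType) (R : realType) m n
    (A : set T) (S : set R) (phi : R -> R) (g : T -> 'M[R]_(m, n)) :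
  {within S, continuous phi} -> (forall x, A x -> forall i j, S (g x i j)) ->
  {within A, continuous g} -> {within A, continuous (fun x => map_mx phi (g x))}.
Proof.
move=> phic gS /continuous_mxP gc; apply/continuous_mxP => i j.
under eq_fun do rewrite mxE.
by apply: (within_continuous_comp (gc i j) _ phic) => x Ax; exact: gS.
Qed.

Lemma within_continuous_epsdelta {K : numFieldType} {U V : pseudoMetricNormedZmodType K}
    (A : set U) (g : U -> V) :
  (forall x, A x -> forall e, 0 < e -> exists2 del, 0 < del &
     forall y, A y -> `|y - x| < del -> `|g y - g x| < e) ->
  {within A, continuous g}.
Proof.
move=> gc; apply/subspace_continuousP => x Ax; apply/cvgrPdist_lt => e e0.
have [del del0 gdel] := gc x Ax e e0.
apply/nbhs_ballP; exists del => // y; rewrite -ball_normE /= => xy Ay.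
by rewrite distrC; apply: gdel => //; rewrite distrC.
Qed.

Lemma affine_continuous (R : realType) (u v : R) : continuous (fun x : R => u * x + v).
Proof.
move=> x; apply: cvgD; last exact: cvg_cst.
by apply: cvgMl_tmp; exact: cvg_id.
Qed.

Lemma unif_continuous_near_segment (R : realType) (s : R -> R) (M e : R) :
  continuous s -> 0 < e -> exists2 del : R, 0 < del &
    forall t x, `|t| <= M -> `|x - t| < del -> `|s x - s t| < e.
Proof.
move=> sc e0.
(* Heine-Cantor: a radius near [0^'+] that works around each point of the
   compact segment works uniformly on it. *)
have := proj1 (compact_near_coveringP _) (@segment_compact _ (- M) M) R (0 : R)^'+
  (fun del t => forall x, `|x - t| < del -> `|s x - s t| < e).
case=> [t0 _|del del0 sdel].
  have e2 : 0 < e / 2 by rewrite divr_gt0.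
  have /cvgrPdist_lt/(_ _ e2)/nbhs_ballP[eta /= eta0 st0] := sc t0.
  exists (ball t0 (eta / 2), [set del | 0 < del < eta / 2]).
    split => /=; first by apply: nbhsx_ballx; lra.
    apply: filterS (filterI (nbhs_right_gt 0) (nbhs_right_lt (_ : 0 < eta / 2))).
      by move=> r [r0 r_lt]; apply/andP.
    lra.
  move=> [t r] /= [+ /andP[r0 r_lt]] x xt; rewrite -ball_normE /= => t0t.
  have t0x : `|t0 - x| < eta by have := ler_distD t t0 x; rewrite (distrC x t) in xt; lra.
  have sx : `|s t0 - s x| < e / 2 by apply: st0; rewrite -ball_normE.
  have st : `|s t0 - s t| < e / 2 by apply: st0; rewrite -ball_normE /=; lra.
  have := ler_distD (s t0) (s x) (s t); rewrite (distrC (s t0) (s x)) in sx; lra.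
have {}del0 : 0 < del := del0.
exists (del / 2); first lra.
move=> t x tM xt; apply: (sdel (del / 2)) => //=; last by rewrite in_itv /= -ler_norml.
  by rewrite sub0r normrN ger0_norm; lra.
lra.
Qed.

Section supdist.
Variables (R : realType) (d m : nat) (K : set 'cV[R]_d).
Implicit Types (g : 'cV[R]_d -> 'cV[R]_m) (S : set ('cV[R]_d -> 'cV[R]_m)).

Definition supdist S g : \bar R :=
  ereal_inf [set supnorm K (fun x => gh x - g x) | gh in S].

Lemma supnorm_ge0 g : (0 <= supnorm K g)%E.
Proof. by apply: ereal_sup_ubound; left. Qed.

Lemma supnorm_ge g x : K x -> ((`|g x|)%:E <= supnorm K g)%E.
Proof. by move=> Kx; apply: ereal_sup_ubound; right; exists x. Qed.

Lemma supnorm_le g (e : R) :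
  0 <= e -> (forall x, K x -> `|g x| <= e) -> (supnorm K g <= e%:E)%E.
Proof.
move=> e0 ge; apply: ge_ereal_sup => _ [->|[x Kx <-]]; rewrite lee_fin //.
exact: ge.
Qed.

Lemma supdist_ge0 S g : (0 <= supdist S g)%E.
Proof. by apply: le_ereal_inf_tmp => _ [gh _ <-]; exact: supnorm_ge0. Qed.

Lemma cvg_supdistP (S : nat -> set ('cV[R]_d -> 'cV[R]_m)) g :
  (fun n => supdist (S n) g) @ \oo --> (0 : R)%:E <->
  forall e : R, 0 < e -> \forall n \near \oo,
    exists2 gh, S n gh & forall x, K x -> `|gh x - g x| < e.
Proof.
split=> [/fine_cvgP[fin_dist dist0] e e0|approx].
  move/cvgrPdist_lt : dist0 => /(_ e e0).
  apply: filterS2 fin_dist => n dist_fin.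
  rewrite /= sub0r normrN => /(le_lt_trans (ler_norm _)).
  rewrite -lte_fin (fineK dist_fin) => /ereal_inf_lt[_ [gh Sgh <-] gh_lt].
  by exists gh => // x Kx; rewrite -lte_fin; apply: le_lt_trans gh_lt; exact: supnorm_ge.
have dist_le e : 0 < e -> \forall n \near \oo, (supdist (S n) g <= e%:E)%E.
  move=> e0; apply: filterS (approx e e0) => n [gh Sgh gh_lt].
  apply: le_trans (supnorm_le (ltW e0) (fun x Kx => ltW (gh_lt x Kx))).
  by apply: ereal_inf_lbound; exists gh.
have dist_fin : \forall n \near \oo, supdist (S n) g \is a fin_num.
  apply: filterS (dist_le 1 ltr01) => n dist_le1.
  by rewrite ge0_fin_numE ?supdist_ge0 // (le_lt_trans dist_le1) ?ltry.
apply/fine_cvgP; split => //; apply/cvgrPdist_lt => e e0.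
have e2 : 0 < e / 2 by rewrite divr_gt0.
apply: filterS2 dist_fin (dist_le _ e2) => n dist_fin' dist_le2.
rewrite sub0r normrN ger0_norm ?fine_ge0 ?supdist_ge0 //.
rewrite -lte_fin (fineK dist_fin'); apply: le_lt_trans dist_le2 _.
by rewrite lte_fin ltr_pdivrMr // ltr_pMr // ltr1n.
Qed.

End supdist.

Lemma cvg_supdist_map_mx (R : realType) d m (K : set 'cV[R]_d)
    (S : nat -> set ('cV[R]_d -> 'cV[R]_m)) (psi : R -> R)
    (g alpha : 'cV[R]_d -> 'cV[R]_m) :
  continuous psi -> bounded_set (g @` K) ->
  (forall x, K x -> alpha x = map_mx psi (g x)) ->
  (fun n => supdist K (S n) g) @ \oo --> (0 : R)%:E ->
  (fun n => supdist K [set (fun x => map_mx psi (gh x)) | gh in S n] alpha)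
    @ \oo --> (0 : R)%:E.
Proof.
move=> psic [M [_ gM]] alphaE /cvg_supdistP approx; apply/cvg_supdistP => e e0.
have [del del0 psi_unif] := unif_continuous_near_segment (M + 1) psic e0.
apply: filterS (approx del del0) => n [gh Sgh gh_near].
exists (fun x => map_mx psi (gh x)); first by exists gh.
move=> x Kx; rewrite alphaE //; apply/mx_norm_ltP; split => // i j.
rewrite !mxE; apply: psi_unif.
  apply: le_trans (ler_entry_mx_norm _ i j) _.
  by apply: (gM (M + 1)); [rewrite ltrDl | exists x].
apply: le_lt_trans (gh_near x Kx).
by have := ler_entry_mx_norm (gh x - g x) i j; rewrite !mxE.
Qed.

Section integral_over_I.
Variable R : realType.
Local Notation mu := (@lebesgue_measure R).
Local Notation I := (@Iset R).

Lemma Iset_measurable : measurable (I : set (measurableTypeR R)).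
Proof.
suff -> : I = `]-1, 1[%classic by exact: measurable_itv.
by apply/seteqP; split => x; rewrite /Iset /= in_itv.
Qed.

Lemma horner_bounded_Iset (p : {poly R}) :
  exists2 M, 0 < M & forall x, I x -> `|p.[x]| <= M.
Proof.
exists (1 + \sum_(i < size p) `|p`_i|) => [|x /andP[x_gt x_lt]].
  by rewrite ltr_wpDr // sumr_ge0.
have x1 : `|x| <= 1 by rewrite ler_norml !ltW.
rewrite horner_coef (le_trans (ler_norm_sum _ _ _)) // ler_wpDl //.
apply: ler_sum => i _; rewrite normrM normrX -[leRHS]mulr1.
by rewrite ler_wpM2l // exprn_ile1.
Qed.

Lemma integrable_mul_horner (g : R -> R) (p : {poly R}) :
  mu.-integrable I (EFin \o g) ->
  mu.-integrable I (fun x => (g x * p.[x])%:E).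
Proof.
move=> gint; have [M M0 pM] := horner_bounded_Iset p.
apply: (integrableMl Iset_measurable gint).
  by apply: measurable_funTS; apply: continuous_measurable_fun; exact: continuous_horner.
exists M; split; first exact: num_real.
by move=> r Mr x Ix; apply: le_trans (pM x Ix) (ltW Mr).
Qed.

Lemma intI_mul_horner_lipschitz (g1 g2 : R -> R) (p : {poly R}) (M : R) :
  mu.-integrable I (EFin \o g1) -> mu.-integrable I (EFin \o g2) ->
  0 <= M -> (forall x, I x -> `|p.[x]| <= M) ->
  ((`|intI (fun x => g1 x * p.[x]) - intI (fun x => g2 x * p.[x])|)%:E
    <= M%:E * \int[mu]_(x in I) (`|g1 x - g2 x|)%:E)%E.
Proof.
move=> g1int g2int M0 pM.
have g1pint := integrable_mul_horner p g1int.
have g2pint := integrable_mul_horner p g2int.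
have mg1 : measurable_fun I g1 by apply/measurable_EFinP; exact: measurable_int g1int.
have mg2 : measurable_fun I g2 by apply/measurable_EFinP; exact: measurable_int g2int.
have mp : measurable_fun I (horner p).
  by apply: measurable_funTS; apply: continuous_measurable_fun; exact: continuous_horner.
have mdiff : measurable_fun I (fun x => (`|g1 x - g2 x|)%:E).
  by apply/measurable_EFinP; apply: measurableT_comp => //; exact: measurable_funB.
rewrite /intI -fineB ?(integrable_fin_num Iset_measurable) //.
have -> := esym (integralB_EFin Iset_measurable g1pint g2pint).
set X := (X in fine X).
have Xfin : X \is a fin_num.
  by rewrite /X (integralB_EFin Iset_measurable g1pint g2pint) fin_numB
    !(integrable_fin_num Iset_measurable).
rewrite (_ : (`|fine X|)%:E = `|X|%E); last by rewrite -[in RHS](fineK Xfin).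
apply: le_trans (le_abse_integral _ Iset_measurable _) _.
  apply/measurable_EFinP; apply: measurable_funB; exact: measurable_funM.
apply: (@le_trans _ _ (\int[mu]_(x in I) (M%:E * (`|g1 x - g2 x|)%:E))%E).
  apply: ge0_le_integral => //.
  - exact: Iset_measurable.
  - apply: measurableT_comp => //; apply/measurable_EFinP.
    by apply: measurable_funB; exact: measurable_funM.
  - apply/measurable_EFinP; apply: measurable_funM; first exact: measurable_cst.
    by apply/measurable_EFinP; exact: mdiff.
  move=> x Ix /=; rewrite -EFinM lee_fin -mulrBl normrM mulrC.
  by apply: ler_wpM2r => //; exact: pM.
by rewrite ge0_integralZl //; exact: Iset_measurable.
Qed.

End integral_over_I.

Section alpha_star_continuity.
Variables (R : realType) (d : nat) (Omega : set 'cV[R]_d) (f : R -> 'cV[R]_d -> R).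
Hypothesis f_CL1 : C_L1 Omega f.

Lemma intI_mul_horner_continuous (p : {poly R}) :
  {within Omega, continuous (fun w => intI (fun x => f x w * p.[x]))}.
Proof.
case: f_CL1 => f_int f_cont.
apply: within_continuous_epsdelta => w Ow e e0.
have [M M0 pM] := horner_bounded_Iset p.
have [del del0 f_del] := f_cont w Ow _ (divr_gt0 e0 M0).
exists del => // w' Ow' ww'; rewrite -lte_fin.
apply: le_lt_trans (intI_mul_horner_lipschitz (f_int _ Ow') (f_int _ Ow) (ltW M0) pM) _.
by rewrite -lte_pdivlMl // -EFinM mulrC; exact: f_del.
Qed.

Lemma Fvec_continuous (a b : nat -> R) (N : nat) :
  {within Omega, continuous (Fvec a b N f)}.
Proof.
apply/continuous_mxP => j k; under eq_fun do rewrite mxE.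
exact: intI_mul_horner_continuous.
Qed.

Lemma alpha_star_continuous (a b : nat -> R) (nu : R) (N : nat) :
  {within Omega, continuous (alpha_star a b nu N f)}.
Proof.
by move=> w; apply: continuous_comp; [exact: Fvec_continuous | exact: mulmx_continuous].
Qed.

End alpha_star_continuity.

Section bounded_activation.
Variables (R : realType) (sigs tau : R -> R) (C : R).
Hypotheses (sigs_cont : continuous sigs)
  (sigs_bounded : exists M, forall s, `|sigs s| <= M)
  (tau_sigs : cancel sigs tau) (tau_cont : {within range sigs, continuous tau}).

Local Notation sm := (inf (range sigs)).
Local Notation sp := (sup (range sigs)).

Lemma sigs_bounds s : sm <= sigs s <= sp.
Proof.
have [M sM] := sigs_bounded.
apply/andP; split; [apply: ge_inf | apply: ub_le_sup]; try by exists s.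
  by exists (- M) => _ [t _ <-]; have := sM t; rewrite ler_norml => /andP[].
by exists M => _ [t _ <-]; have := sM t; rewrite ler_norml => /andP[].
Qed.

Lemma inf_lt_sup_range : sm < sp.
Proof.
rewrite ltNge; apply/negP => sp_le_sm.
have /andP[s0_ge s0_le] := sigs_bounds 0; have /andP[s1_ge s1_le] := sigs_bounds 1.
have /(congr1 tau) : sigs 0 = sigs 1.
  by apply/eqP; rewrite eq_le (le_trans s0_le (le_trans sp_le_sm s1_ge))
    (le_trans s1_le (le_trans sp_le_sm s0_ge)).
by rewrite !tau_sigs => /eqP; rewrite eq_sym oner_eq0.
Qed.

Lemma range_sigs_itv y : sm < y < sp -> range sigs y.
Proof.
move=> /andP[sm_y y_sp].
have sigs_ne : range sigs !=set0 by exists (sigs 0), 0.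
have [_ [s1 _ <-] s1_y] := inf_lt sigs_ne sm_y.
have [_ [s2 _ <-] y_s2] := sup_gt sigs_ne y_sp.
have ivt a b : a <= b -> Num.min (sigs a) (sigs b) <= y <= Num.max (sigs a) (sigs b) ->
    range sigs y.
  move=> ab yab; have [c _ <-] := IVT ab (continuous_subspaceT sigs_cont) yab.
  by exists c.
have [le12|/ltW le21] := leP s1 s2; [apply: ivt le12 _ | apply: ivt le21 _];
  by rewrite ge_min le_max (ltW s1_y) (ltW y_s2) ?orbT.
Qed.

Definition hmap_inv (y : R) : R := (sp - sm) / (2 * C) * y + (sp + sm) / 2.

Lemma hmap_invK y : 0 < C -> hmap sigs C (hmap_inv y) = y.
Proof.
move=> C0; have := inf_lt_sup_range; rewrite -subr_gt0 => sp_sm.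
by rewrite /hmap /hmap_inv; field; rewrite !gt_eqF.
Qed.

Lemma hmap_inv_range y : `|y| < C -> range sigs (hmap_inv y).
Proof.
rewrite ltr_norml => /andP[Cy yC]; apply: range_sigs_itv.
have := inf_lt_sup_range; rewrite -subr_gt0 => sp_sm.
have C0 : 0 < C by lra.
have -> : hmap_inv y = (sp + sm) / 2 + (sp - sm) / 2 * (y / C).
  by rewrite /hmap_inv; field; rewrite gt_eqF.
have : -1 < y / C by rewrite ltr_pdivlMr // mulN1r.
have : y / C < 1 by rewrite ltr_pdivrMr // mul1r.
move: sp_sm; set t := y / C => sp_sm t_lt t_gt; apply/andP; split; nra.
Qed.

Lemma hmap_continuous : continuous (hmap sigs C).
Proof.
have -> : hmap sigs C = fun s => 2 * C / (sp - sm) * s + (- C - 2 * C * sm / (sp - sm)).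
  by apply/funext => s; rewrite /hmap; ring.
exact: affine_continuous.
Qed.

Definition hsigs_inv (y : R) : R := tau (hmap_inv y).

Lemma hsigs_invK y : `|y| < C -> hmap sigs C (sigs (hsigs_inv y)) = y.
Proof.
move=> yC; have [s _ sE] := hmap_inv_range yC.
by rewrite /hsigs_inv -sE tau_sigs sE hmap_invK // (le_lt_trans _ yC).
Qed.

Lemma hsigs_inv_continuous : {within [set y | `|y| < C], continuous hsigs_inv}.
Proof.
apply: (within_continuous_comp _ hmap_inv_range tau_cont).
exact/continuous_subspaceT/affine_continuous.
Qed.

Lemma hmap_sigs_continuous : continuous (hmap sigs C \o sigs).
Proof.
by move=> s; apply: continuous_comp; [exact: sigs_cont | exact: hmap_continuous].
Qed.

End bounded_activation.

Unset Implicit Arguments.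

Theorem theorem2p2 (R : realType) (d N : nat) (a b : nat -> R) (nu : R)
  (f : R -> 'cV[R]_d -> R) (Omega : set 'cV[R]_d)
  (sigma : R -> R) (hs : nat -> seq nat) (sigs : R -> R) (C : R) :
  0 <= nu ->
  C_L1 Omega f ->
  (Amat a b nu N)^T = Amat a b nu N ->
  Amat a b nu N \in unitmx ->
  (* nested architectures *)
  (forall n, nn_set sigma d (hs n) N.-1 `<=` nn_set sigma d (hs n.+1) N.-1) ->
  (* universal approximation *)
  (forall (K : set 'cV[R]_d) (g : 'cV[R]_d -> 'cV[R]_(N.-1)),
      compact K -> {within K, continuous g} ->
      (fun n => ereal_inf [set supnorm K (fun x => gh x - g x)
                           | gh in nn_set sigma d (hs n) N.-1]) @ \oo --> (0 : R)%:E) ->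
  (* bounded activation with continuous inverse *)
  continuous sigs ->
  (exists M : R, forall s, `|sigs s| <= M) ->
  (exists tau : R -> R, (forall s, tau (sigs s) = s) /\
                        {within range sigs, continuous tau}) ->
  compact Omega ->
  (ereal_sup [set (`|alpha_star a b nu N f w|)%:E | w in Omega] < C%:E)%E ->
  (fun n => ereal_inf [set supnorm Omega (fun w => gt w - alpha_star a b nu N f w)
                       | gt in nn_bounded sigma sigs C d (hs n) N.-1]) @ \oo --> (0 : R)%:E.
Proof.
move=> _ f_CL1 _ _ _ UA sigs_cont sigs_bounded [tau [tau_sigs tau_cont]] Omega_compact
  alpha_lt_C.
set alpha := alpha_star a b nu N f.
have alpha_entry_lt w i j : Omega w -> `|alpha w i j| < C.
  move=> Ow; apply: le_lt_trans (ler_entry_mx_norm _ i j) _.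
  by rewrite -lte_fin; apply: le_lt_trans alpha_lt_C; apply: ereal_sup_ubound; exists w.
have alpha_cont : {within Omega, continuous alpha} by exact: alpha_star_continuous.
clearbody alpha.
pose g0 w := map_mx (hsigs_inv sigs tau C) (alpha w).
have g0_cont : {within Omega, continuous g0}.
  apply: (within_continuous_map_mx
    (hsigs_inv_continuous sigs_cont sigs_bounded tau_sigs tau_cont) _ alpha_cont).
  by move=> w Ow i j; exact: alpha_entry_lt.
apply: (cvg_supdist_map_mx (g := g0)) (UA _ _ Omega_compact g0_cont).
- exact: hmap_sigs_continuous.
- exact: compact_bounded (continuous_compact g0_cont Omega_compact).
- move=> w Ow; apply/matrixP => i j; rewrite !mxE /=.
  by rewrite hsigs_invK // alpha_entry_lt.
Qed.
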